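(* Let $G$ be a finite simple undirected connected graph, and let $c:V(G)\to \mathbb{R}_{>0}$ and $\kappa:V(G)\to \mathbb{Z}$ be functions such that $0\leq \kappa(u)\leq d_G(u)$ for every vertex $u$ of $G$. Then $$\alpha(G,c,\kappa) = \sum_{u\in V(G)} \frac{c(u)(\kappa(u)+1)}{d_G(u)+1}$$ holds if and only if either (i) $\kappa(u)=d_G(u)$ for every vertex $u$ of $G$, or (ii) $G$ is a clique (complete graph) and both $c$ and $\kappa$ are constant on $V(G)$.
   Context: $d_G(u)$ denotes the degree of $u$ in $G$, and $[n]=\{1,\dots,n\}$. For a set $I\subseteq V(G)$, its $c$-weight is $c(I)=\sum_{u\in I}c(u)$. A set $I\subseteq V(G)$ is called $\kappa$-degenerate in $G$ if there is a linear ordering $u_1,\ldots,u_k$ of the vertices of $I$ such that for every $i\in[k]$, $u_i$ has at most $\kappa(u_i)$ neighbors in $\{u_j: j\in[i-1]\}$. $\alpha(G,c,\kappa)$ denotes the maximum $c$-weight of a $\kappa$-degenerate set of vertices of $G$. (It is known that always $\alpha(G,c,\kappa)\geq \sum_{u\in V(G)} \frac{c(u)(\kappa(u)+1)}{d_G(u)+1}$.) *)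

From HB Require Import structures.
From mathcomp Require Import all_boot all_order all_algebra.
Set Implicit Arguments. Unset Strict Implicit. Unset Printing Implicit Defensive.
Import Order.TTheory GRing.Theory Num.Theory.
Local Open Scope ring_scope.

Definition simple_graph (T : finType) (e : rel T) : Prop :=
  irreflexive e /\ symmetric e.

Definition graph_connected (T : finType) (e : rel T) : Prop :=
  forall x y : T, connect e x y.

Definition deg (T : finType) (e : rel T) (u : T) : nat := #|[set v | e u v]|.

Definition weight (T : finType) (R : numDomainType) (c : T -> R) (I : {set T}) : R :=
  \sum_(u in I) c u.

(* I is kappa-degenerate: there is a linear ordering u_1..u_k of I (k = |I|,
   given as a duplicate-free tuple s enumerating I) such that each u_i has at
   most kappa(u_i) neighbours among u_1..u_{i-1} (= take i s, 0-indexed). *)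
Definition kdegenerate (T : finType) (e : rel T) (kappa : T -> int) (I : {set T}) : bool :=
  [exists s : #|I|.-tuple T,
    [&& uniq s, [set x in s] == I &
        [forall i : 'I_#|I|,
           (count (e (tnth s i)) (take i s))%:Z <= kappa (tnth s i)]]].

(* alpha(G,c,kappa): the maximum c-weight of a kappa-degenerate set.  The empty
   set is always kappa-degenerate (weight 0), so taking the max with initial
   value 0 gives exactly this maximum. *)
Definition alpha (T : finType) (e : rel T) (R : realDomainType) (c : T -> R)
  (kappa : T -> int) : R :=
  \big[Num.max/0]_(I : {set T} | kdegenerate e kappa I) weight c I.

(* Order the vertices by a permutation and keep every vertex u having at most kappa(u)
   neighbours earlier in the order.  The kept ("greedy") set is kappa-degenerate, and u is
   kept for a fraction (kappa(u)+1)/(d(u)+1) of all orders: it must be among the first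
   kappa(u)+1 vertices of its closed neighbourhood.  Averaging over all orders gives the
   lower bound, so equality forces every greedy set to have maximum weight.
   Let xy be an edge and P a prefix containing exactly kappa(x) neighbours of x.  Swapping
   x and y in the order P x y Q changes the greedy set only at x, which leaves it, and at y;
   comparing weights shows that P contains exactly kappa(y) neighbours of y and c(x) = c(y).
   Taking P among the neighbours of x, this shows that if kappa(x) < d(x) then y has the
   same closed neighbourhood, weight and kappa as x, so by connectivity G is a clique with
   c and kappa constant.  Conversely, if kappa = d every set is kappa-degenerate, and in a
   clique a kappa-degenerate set has at most kappa+1 vertices. *)

From HB Require Import structures.
From mathcomp Require Import all_boot all_order all_algebra all_fingroup.
From mathcomp Require Import ring.
Import Order.TTheory GRing.Theory Num.Theory.

Set Implicit Arguments. Unset Strict Implicit. Unset Printing Implicit Defensive.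

Section Before.
Variable T : eqType.
Implicit Types (s P Q : seq T) (x y z : T).

Definition before s x : seq T := take (index x s) s.

Lemma size_before s x : size (before s x) = index x s.
Proof. by rewrite size_takel // index_size. Qed.

Lemma before_notin s x : x \notin before s x.
Proof. by apply/negP => /index_ltn; rewrite ltnn. Qed.

Lemma before_nth x0 s i : uniq s -> i < size s -> before s (nth x0 s i) = take i s.
Proof. by move=> us ilt; rewrite /before index_uniq. Qed.

Lemma before_filter (p : pred T) s x :
  p x -> before (filter p s) x = filter p (before s x).
Proof.
move=> px; elim: s => [|a s IHs] //=; rewrite /before /=.
case: (eqVneq a x) => [->|ax]; first by rewrite px /= eqxx.
by case pa: (p a) => /=; rewrite ?(negPf ax) ?pa /= -/(before _ _) IHs.
Qed.

Lemma before_pivot P Q x : x \notin P -> before (P ++ x :: Q) x = P.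
Proof. exact: take_pivot. Qed.

Lemma before_rcons_pivot P Q x y : y \notin P -> y != x ->
  before (P ++ x :: y :: Q) y = rcons P x.
Proof.
move=> yP yx; rewrite -cat_rcons before_pivot //.
by rewrite -cats1 mem_cat negb_or yP inE.
Qed.

Lemma perm_before_swap P Q x y z : z != x -> z != y ->
  perm_eq (before (P ++ x :: y :: Q) z) (before (P ++ y :: x :: Q) z).
Proof.
move=> zx zy; rewrite /before !index_cat.
case: ifP => zP; first by rewrite !take_cat index_mem zP.
rewrite /= !(eq_sym _ z) (negPf zx) (negPf zy) !take_cat ltnNge leq_addr /= addKn.
by rewrite perm_cat2l /= -[x :: _]/([:: x] ++ _) -[y :: _]/([:: y] ++ _) perm_catCA.
Qed.

End Before.

Section Greedy.
Variables (T : finType) (e : rel T) (kappa : T -> int).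
Local Open Scope ring_scope.

Definition greedy (s : seq T) : {set T} :=
  [set z | (count (e z) (before s z))%:Z <= kappa z].

Lemma kdegenerate_seq (s : seq T) : uniq s ->
  {in s, forall z, (count (e z) (before s z))%:Z <= kappa z} ->
  kdegenerate e kappa [set z in s].
Proof.
move=> us s_deg; have size_s : size s == #|[set z in s]|.
  by rewrite cardsE (card_uniqP us).
apply/existsP; exists (Tuple size_s); apply/and3P; split => //.
apply/forallP => i; have i_s : (i < size s)%N by rewrite (eqP size_s).
rewrite (tnth_nth (tnth (Tuple size_s) i)) /= -(before_nth (tnth (Tuple size_s) i)) //.
by apply: s_deg; rewrite mem_nth.
Qed.

Lemma greedy_kdegenerate (s : seq T) : uniq s -> (forall z, z \in s) ->
  kdegenerate e kappa (greedy s).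
Proof.
move=> us s_full; set I := greedy s.
have -> : I = [set z in filter (mem I) s].
  by apply/setP => z; rewrite inE mem_filter s_full andbT.
apply: kdegenerate_seq; first exact: filter_uniq.
move=> z; rewrite mem_filter => /andP [zI _].
rewrite before_filter //; apply: le_trans (_ : (count (e z) (before s z))%:Z <= _).
  by rewrite lez_nat count_filter; apply: sub_count => ? /andP [].
by move: zI; rewrite /= inE.
Qed.

End Greedy.

Section PermEnum.
Variable T : finType.
Implicit Types (A : {set T}) (s t : {perm T}) (L : seq T).

Definition perm_enum s : seq T := map s (enum T).

Lemma perm_enum_uniq s : uniq (perm_enum s).
Proof. by rewrite map_inj_uniq ?enum_uniq //; apply: perm_inj. Qed.

Lemma mem_perm_enum s z : z \in perm_enum s.
Proof. by rewrite -[z](permKV s) map_f // mem_enum. Qed.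

Lemma perm_enumM s t : perm_enum (s * t)%g = map t (perm_enum s).
Proof. by rewrite /perm_enum -map_comp; apply: eq_map => z /=; rewrite permM. Qed.

Lemma perm_enum_surj L : uniq L -> (forall z, z \in L) ->
  exists s, perm_enum s = L.
Proof.
move=> uL L_full; have size_L : size L = size (enum T).
  by rewrite -(card_uniqP uL) -cardT; apply: eq_card => z; rewrite L_full.
pose f z := nth z L (index z (enum T)).
have ilt z : index z (enum T) < size L by rewrite size_L index_mem mem_enum.
have f_inj : injective f.
  move=> a b; rewrite /f (set_nth_default a b (ilt b)) => /eqP.
  rewrite nth_uniq // => /eqP /(congr1 (nth a (enum T))).
  by rewrite !nth_index ?mem_enum.
exists (perm f_inj); case: L => [|x0 L'] in uL L_full size_L ilt f f_inj *.
  by apply/eqP; rewrite -size_eq0 size_map -size_L.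
apply: (@eq_from_nth _ x0); rewrite size_map // => i i_lt.
rewrite /perm_enum (nth_map x0) // permE /f (set_nth_default x0) ?index_uniq ?enum_uniq //.
by rewrite size_L.
Qed.

Definition rank A L w : nat := count (mem A) (before L w).

Lemma rank_index A L w : w \in A -> rank A L w = index w (filter (mem A) L).
Proof. by move=> wA; rewrite /rank -size_filter -before_filter // size_before. Qed.

Lemma sum_rank_leq A L k : uniq L -> (forall z, z \in L) -> k < #|A| ->
  \sum_(w in A) (rank A L w <= k) = k.+1.
Proof.
move=> uL L_full kA; set f := filter (mem A) L.
have uf : uniq f by exact: filter_uniq.
have mem_f w : (w \in f) = (w \in A) by rewrite mem_filter L_full andbT.
have size_f : size f = #|A| by rewrite -(card_uniqP uf); apply: eq_card.
rewrite -[k.+1](@size_takel _ _ f) ?size_f // -(card_uniqP (take_uniq _ uf)).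
rewrite -sum1_card big_mkcond [RHS]big_mkcond /=; apply: eq_bigr => w _.
case wA: (w \in A); last by case: ifP => // /mem_take; rewrite mem_f wA.
by rewrite in_take ?mem_f // rank_index //; case: (_ < _).
Qed.

Lemma rank_tperm A s u w : u \in A -> w \in A ->
  rank A (perm_enum (s * tperm u w)%g) w = rank A (perm_enum s) u.
Proof.
move=> uA wA; rewrite /rank /before perm_enumM -{1}(tpermL u w).
rewrite index_map; last exact: perm_inj.
rewrite -map_take count_map; apply: eq_count => z /=.
by case: tpermP => [->|->|] //; rewrite ?uA ?wA.
Qed.

(* Right multiplication by [tperm u w] moves the rank of [u] to [w], so every vertex
   of [A] is among the first [k.+1] of [A] for equally many permutations. *)
Lemma card_perm_rank_leq A u k : u \in A -> k < #|A| ->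
  #|A| * (\sum_s (rank A (perm_enum s) u <= k)) = #|{perm T}| * k.+1.
Proof.
move=> uA kA; rewrite -sum_nat_const -[in RHS]sum_nat_const.
transitivity (\sum_s \sum_(w in A) (rank A (perm_enum s) w <= k)); last first.
  apply: eq_bigr => s _; rewrite sum_rank_leq // ?perm_enum_uniq //.
  exact: mem_perm_enum.
rewrite [RHS]exchange_big /=; apply: eq_bigr => w wA.
rewrite (reindex_inj (mulIg (tperm u w))) /=.
by apply: eq_bigr => s _; rewrite tpermC rank_tperm.
Qed.

End PermEnum.

Section Neighbourhood.
Variables (T : finType) (e : rel T).
Hypothesis e_irr : irreflexive e.

Definition closed_nbhd u : {set T} := [set v | (v == u) || e u v].

Lemma card_closed_nbhd u : #|closed_nbhd u| = (deg e u).+1.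
Proof.
have -> : closed_nbhd u = u |: [set v | e u v] by apply/setP => v; rewrite !inE.
by rewrite cardsU1 inE e_irr.
Qed.

Lemma count_before_nbhd L u : count (e u) (before L u) = rank (closed_nbhd u) L u.
Proof.
apply: eq_in_count => z z_before; rewrite /= inE.
by case: eqP z_before => [->|//]; rewrite (negPf (before_notin _ _)).
Qed.

Lemma sum_perm_mem_greedy (kappa : T -> int) u (k : nat) :
  (kappa u = k%:Z)%R -> k <= deg e u ->
  (deg e u).+1 * (\sum_(s : {perm T}) (u \in greedy e kappa (perm_enum s)))
    = #|{perm T}| * k.+1.
Proof.
move=> kappa_u k_le; rewrite -card_closed_nbhd.
rewrite -(@card_perm_rank_leq _ (closed_nbhd u) u); last 2 first.
- by rewrite !inE eqxx.
- by rewrite card_closed_nbhd ltnS.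
by congr (_ * _); apply: eq_bigr => s _; rewrite inE count_before_nbhd kappa_u.
Qed.

End Neighbourhood.

Section Weight.
Variables (R : numDomainType) (T : finType) (c : T -> R).
Local Open Scope ring_scope.

Lemma weight_indicator (I : {set T}) : weight c I = \sum_u c u * (u \in I)%:R.
Proof.
by rewrite /weight big_mkcond; apply: eq_bigr => u _; case: (u \in I); rewrite ?mulr1 ?mulr0.
Qed.

Lemma weightB_agree_off2 (I J : {set T}) x y : x != y ->
  (forall z, z != x -> z != y -> (z \in I) = (z \in J)) ->
  weight c I - weight c J =
    c x * ((x \in I)%:R - (x \in J)%:R) + c y * ((y \in I)%:R - (y \in J)%:R).
Proof.
move=> xy IJ; rewrite !weight_indicator -sumrB (bigD1 x) // (bigD1 y) 1?eq_sym //=.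
rewrite big1 ?addr0 ?mulrBr // => z /andP [zy zx].
by rewrite IJ // subrr.
Qed.

End Weight.

Section CaroWei.
Variables (R : realFieldType) (T : finType) (e : rel T) (c : T -> R) (kappa : T -> int).
Local Open Scope ring_scope.

Definition caro_wei : R :=
  \sum_(u : T) c u * ((kappa u)%:~R + 1) / ((deg e u)%:R + 1).

Hypotheses (e_irr : irreflexive e)
  (kappa_range : forall u, 0 <= kappa u /\ kappa u <= (deg e u)%:Z).

Lemma sum_weight_greedy :
  \sum_(s : {perm T}) weight c (greedy e kappa (perm_enum s)) = #|{perm T}|%:R * caro_wei.
Proof.
under eq_bigr do rewrite weight_indicator.
rewrite exchange_big mulr_sumr; apply: eq_bigr => u _.
have [kappa_ge0 kappa_le] := kappa_range u.
have [k kappa_u] : exists k : nat, kappa u = k%:Z by exists `|kappa u|%N; rewrite gez0_abs.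
have := sum_perm_mem_greedy e_irr kappa_u; rewrite -lez_nat -kappa_u => /(_ kappa_le).
move=> /(congr1 (fun n => n%:R : R)); rewrite !natrM -!natr1 => count_u.
have D_neq0 : (deg e u)%:R + 1 != 0 :> R by rewrite natr1 pnatr_eq0.
rewrite -mulr_sumr -natr_sum -(mulKf D_neq0 (_%:R)) count_u kappa_u -pmulrn.
by ring.
Qed.

Lemma weight_greedy_le_alpha s : weight c (greedy e kappa (perm_enum s)) <= alpha e c kappa.
Proof.
by apply/le_bigmax_cond/greedy_kdegenerate; [exact: perm_enum_uniq | exact: mem_perm_enum].
Qed.

Lemma caro_wei_le_alpha : caro_wei <= alpha e c kappa.
Proof.
have perm_gt0 : 0 < #|{perm T}|%:R :> R by rewrite ltr0n; apply/card_gt0P; exists 1%g.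
rewrite -(ler_pM2l perm_gt0) -sum_weight_greedy mulr_natl -sumr_const.
by apply: ler_sum => s _; apply: weight_greedy_le_alpha.
Qed.

Lemma weight_greedy_eq_alpha : alpha e c kappa = caro_wei ->
  forall L, uniq L -> (forall z, z \in L) -> weight c (greedy e kappa L) = alpha e c kappa.
Proof.
move=> alpha_eq L uL L_full; have [s <-] := perm_enum_surj uL L_full.
have gap_ge0 (t : {perm T}) :
    true -> 0 <= alpha e c kappa - weight c (greedy e kappa (perm_enum t)).
  by rewrite subr_ge0 weight_greedy_le_alpha.
have gap_sum : \sum_t (alpha e c kappa - weight c (greedy e kappa (perm_enum t))) = 0.
  by rewrite sumrB sum_weight_greedy sumr_const alpha_eq mulr_natl subrr.
by apply/eqP; rewrite eq_sym -subr_eq0; apply/eqP/(psumr_eq0P gap_ge0 gap_sum).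
Qed.

End CaroWei.

Lemma uniq_extend (T : finType) (s : seq T) : uniq s ->
  exists2 Q, uniq (s ++ Q) & forall z, z \in s ++ Q.
Proof.
move=> us; exists [seq z <- enum T | z \notin s].
  rewrite cat_uniq us filter_uniq ?enum_uniq // andbT.
  by apply/hasPn => z; rewrite mem_filter => /andP [].
by move=> z; rewrite mem_cat mem_filter mem_enum andbT orbN.
Qed.

Section Exchange.
Variables (R : numDomainType) (T : finType) (e : rel T) (c : T -> R) (kappa : T -> int).
Local Open Scope ring_scope.

Definition exchange_property : Prop :=
  forall x y P, e x y -> uniq P -> x \notin P -> y \notin P ->
  (count (e x) P)%:Z = kappa x -> (count (e y) P)%:Z = kappa y /\ c x = c y.

Lemma exchange_of_greedy_const (w : R) :
  simple_graph e -> (forall u, 0 < c u) ->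
  (forall L, uniq L -> (forall z, z \in L) -> weight c (greedy e kappa L) = w) ->
  exchange_property.
Proof.
move=> [e_irr e_sym] c_gt0 greedy_const x y P exy uP xP yP count_x.
have xy : x != y by apply: contraTneq exy => ->; rewrite e_irr.
have [Q uQ Q_full] :
    exists2 Q, uniq ([:: x, y & P] ++ Q) & forall z, z \in [:: x, y & P] ++ Q.
  by apply: uniq_extend; rewrite /= inE negb_or xy xP yP uP.
set L := P ++ [:: x, y & Q]; set L' := P ++ [:: y, x & Q].
have permL : perm_eq L ([:: x, y & P] ++ Q).
  by rewrite /L -[[:: x, y & Q]]/([:: x; y] ++ Q) perm_catCA.
have permL' : perm_eq L' ([:: x, y & P] ++ Q).
  rewrite (perm_trans _ permL) // perm_cat2l.
  by rewrite -[[:: y, x & Q]]/([:: y] ++ [:: x] ++ Q) perm_catCA.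
have [Lw L'w] : weight c (greedy e kappa L) = w /\ weight c (greedy e kappa L') = w.
  by split; apply: greedy_const => [|z]; rewrite ?(perm_uniq permL) ?(perm_uniq permL')
     ?(perm_mem permL) ?(perm_mem permL').
have agree z : z != x -> z != y -> (z \in greedy e kappa L) = (z \in greedy e kappa L').
  by move=> zx zy; rewrite !inE; have /seq.permP -> := perm_before_swap P Q zx zy.
have := weightB_agree_off2 c xy agree; rewrite Lw L'w subrr !inE.
rewrite (before_pivot _ xP) (before_pivot _ yP).
rewrite (before_rcons_pivot _ yP) 1?eq_sym // (before_rcons_pivot _ xP) //.
rewrite -!cats1 !count_cat /= exy (e_sym y x) exy /= !PoszD count_x !lezD1 lexx ltxx.
rewrite subr0 mulr1 le_eqVlt.
(* [x] leaves the greedy set, so [c x] must be balanced by [y] entering it. *)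
have cx_gt0 := c_gt0 x; case: ltgtP => [_|_|->] /=; last first.
  by rewrite sub0r mulrN1 => /eqP; rewrite eq_sym subr_eq0 => /eqP.
all: by rewrite subrr mulr0 addr0 => cx0; rewrite -cx0 ltxx in cx_gt0.
Qed.

End Exchange.

Section Twins.
Variables (R : numDomainType) (T : finType) (e : rel T) (c : T -> R) (kappa : T -> int).
Hypotheses (e_irr : irreflexive e) (e_sym : symmetric e)
  (kappa_ge0 : forall u, (0 <= kappa u)%R) (exchange : exchange_property e c kappa).

Definition nbrs_but x y : {set T} := [set z | e x z && (z != y)].

Lemma card_nbrs_but x y : e x y -> #|nbrs_but x y|.+1 = deg e x.
Proof.
move=> exy; rewrite /deg (cardsD1 y [set z | e x z]) inE exy add1n.
by congr S; apply: eq_card => z; rewrite !inE andbC.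
Qed.

Lemma nbrs_but_seq x y k : e x y -> k < deg e x ->
  exists P, [/\ uniq P, size P = k & {subset P <= nbrs_but x y}].
Proof.
move=> exy k_lt; exists (take k (enum (nbrs_but x y))); split.
- exact/take_uniq/enum_uniq.
- by rewrite size_takel // -cardE -ltnS card_nbrs_but.
- by move=> z /mem_take; rewrite mem_enum.
Qed.

Lemma exchange_nbrs_but x y P : e x y -> uniq P -> {subset P <= nbrs_but x y} ->
  ((size P)%:Z = kappa x)%R ->
  [/\ ((count (e y) P)%:Z = kappa y)%R, c x = c y & forall z, z != x -> e y z -> e x z].
Proof.
move=> exy uP P_nbrs size_P.
have xP : x \notin P by apply/negP => /P_nbrs; rewrite inE e_irr.
have yP : y \notin P by apply/negP => /P_nbrs; rewrite inE eqxx andbF.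
have count_x : count (e x) P = size P.
  by apply/eqP; rewrite -all_count; apply/allP => z /P_nbrs; rewrite inE => /andP [].
have [count_y cxy] := exchange exy uP xP yP (etrans (congr1 Posz count_x) size_P).
split=> // z zx eyz; apply: contraT => exz.
have zP : z \notin P by apply: contra exz => /P_nbrs; rewrite inE => /andP [].
have zy : z != y by apply: contraTneq eyz => ->; rewrite e_irr.
have := exchange (P := z :: P) exy; rewrite /= zP uP !inE !negb_or xP yP.
rewrite eq_sym zx eq_sym zy (negPf exz) eyz count_x size_P => /(_ isT isT isT erefl) [].
by rewrite -count_y add1n => /eqP; rewrite eqz_nat (gtn_eqF (ltnSn _)).
Qed.

Lemma exchange_edge x y : e x y -> (kappa x < (deg e x)%:Z)%R ->
  [/\ c x = c y, (kappa y <= kappa x)%R, (kappa y < (deg e y)%:Z)%R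
     & forall z, z != x -> e y z -> e x z].
Proof.
move=> exy kx_lt.
have [k kappa_x] : exists k : nat, (kappa x = k%:Z)%R by exists `|kappa x|%N; rewrite gez0_abs.
have [P [uP size_P P_nbrs]] : exists P, [/\ uniq P, size P = k & {subset P <= nbrs_but x y}].
  by apply: nbrs_but_seq; rewrite // -ltz_nat -kappa_x.
have size_kappa : ((size P)%:Z = kappa x)%R by rewrite size_P kappa_x.
have [count_y cxy sub_yx] := exchange_nbrs_but exy uP P_nbrs size_kappa.
split => //; first by rewrite -count_y kappa_x -size_P lez_nat count_size.
have eyx : e y x by rewrite e_sym.
rewrite -count_y ltz_nat -(card_nbrs_but eyx) ltnS -size_filter.
rewrite -(card_uniqP (filter_uniq _ uP)); apply/subset_leq_card/subsetP => z.
rewrite mem_filter !inE => /andP [eyz /P_nbrs]; rewrite inE => /andP [exz _].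
by rewrite eyz; apply: contraTneq exz => ->; rewrite e_irr.
Qed.

Lemma edge_twins x y : e x y -> (kappa x < (deg e x)%:Z)%R ->
  [/\ closed_nbhd e y = closed_nbhd e x, c y = c x & kappa y = kappa x].
Proof.
move=> exy kx_lt; have [cxy ky_le ky_lt sub_yx] := exchange_edge exy kx_lt.
have [_ kx_le _ sub_xy] := exchange_edge (etrans (e_sym y x) exy) ky_lt.
split; [|by []|by apply/eqP; rewrite eq_le ky_le kx_le].
apply/setP => z; rewrite !inE.
case: (eqVneq z x) => [->|zx]; first by rewrite e_sym exy orbT.
case: (eqVneq z y) => [->|zy]; first by rewrite exy orbT.
by apply/idP/idP => [/sub_yx|/sub_xy]; apply.
Qed.

Lemma exchange_clique x0 : graph_connected e -> (kappa x0 < (deg e x0)%:Z)%R ->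
  [/\ forall u v, u != v -> e u v, forall u, c u = c x0 & forall u, kappa u = kappa x0].
Proof.
move=> e_conn kx0_lt.
pose twin_x0 := [pred v |
  [&& closed_nbhd e v == closed_nbhd e x0, c v == c x0 & kappa v == kappa x0]].
have twin_closed : closed e twin_x0.
  apply: intro_closed; first exact: sym_connect_sym.
  move=> x y exy /and3P [/eqP Nx /eqP cx /eqP kx].
  have deg_x : deg e x = deg e x0 by apply/eqP; rewrite -eqSS -!card_closed_nbhd // Nx.
  have kx_lt : (kappa x < (deg e x)%:Z)%R by rewrite kx deg_x.
  have [Ny cy ky] := edge_twins exy kx_lt.
  by rewrite inE Ny Nx cy cx ky kx !eqxx.
have twin z : z \in twin_x0.
  by rewrite -(closed_connect twin_closed (e_conn x0 z)) inE !eqxx.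
split=> [u v uv|u|u]; have /and3P [/eqP Nu /eqP cu /eqP ku] := twin u => //.
have /and3P [/eqP Nv _ _] := twin v.
have : v \in closed_nbhd e u by rewrite Nu -Nv !inE eqxx.
by rewrite inE eq_sym (negPf uv).
Qed.

End Twins.

Section Clique.
Variables (T : finType) (e : rel T).
Hypotheses (e_irr : irreflexive e) (e_clique : forall u v, u != v -> e u v).

Lemma deg_clique u : deg e u = #|T|.-1.
Proof.
rewrite /deg -(cardsC1 u); apply: eq_card => v; rewrite !inE.
by case: (eqVneq v u) => [->|vu]; rewrite ?e_irr ?e_clique // eq_sym.
Qed.

Lemma kdegenerate_clique_card (kappa : T -> int) (k : nat) (I : {set T}) :
  (forall u, kappa u = k%:Z)%R -> kdegenerate e kappa I -> #|I| <= k.+1.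
Proof.
move=> kappa_k /existsP [s /and3P [us _ /forallP s_deg]].
case I_eq: #|I| => [//|n]; have n_lt : n < #|I| by rewrite I_eq.
have := s_deg (Ordinal n_lt); rewrite kappa_k lez_nat /=; set x := tnth s _.
have before_x : take n s = before s x.
  by rewrite /x (tnth_nth (tnth s (Ordinal n_lt))) before_nth // size_tuple.
rewrite (@eq_in_count _ _ predT) ?count_predT ?size_takel ?size_tuple ?I_eq //.
move=> z; rewrite before_x => z_before; apply/e_clique/eqP => xz.
by move: z_before; rewrite -xz (negPf (before_notin s x)).
Qed.

End Clique.

Section CaroWeiExtremal.
Variables (R : realFieldType) (T : finType) (e : rel T) (c : T -> R) (kappa : T -> int).
Hypotheses (c_ge0 : forall u, (0 <= c u)%R) (kappa_ge0 : forall u, (0 <= kappa u)%R).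
Local Open Scope ring_scope.

Lemma caro_wei_ge0 : 0 <= caro_wei e c kappa.
Proof.
apply: sumr_ge0 => u _; rewrite divr_ge0 ?addr_ge0 ?ler0n // mulr_ge0 //.
by rewrite addr_ge0 ?ler0z.
Qed.

Lemma alpha_le_caro_wei_full : (forall u, kappa u = (deg e u)%:Z) ->
  alpha e c kappa <= caro_wei e c kappa.
Proof.
move=> kappa_deg; have -> : caro_wei e c kappa = \sum_u c u.
  apply: eq_bigr => u _; rewrite kappa_deg -pmulrn mulfK //.
  by rewrite natr1 pnatr_eq0.
apply: bigmax_le => [|I _]; first by rewrite sumr_ge0.
rewrite weight_indicator; apply: ler_sum => u _.
by case: (u \in I); rewrite ?mulr1 ?mulr0.
Qed.

Lemma alpha_le_caro_wei_clique : irreflexive e -> (forall u v, u != v -> e u v) ->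
  (forall u v, c u = c v) -> (forall u v, kappa u = kappa v) ->
  alpha e c kappa <= caro_wei e c kappa.
Proof.
move=> e_irr e_clique c_const kappa_const.
apply: bigmax_le => [|I I_deg]; first exact: caro_wei_ge0.
have [->|[u0 u0_I]] := set_0Vmem I; first by rewrite /weight big_set0 caro_wei_ge0.
have [k kappa_k] : exists k : nat, kappa u0 = k%:Z by exists `|kappa u0|%N; rewrite gez0_abs.
have kappa_u u : kappa u = k%:Z by rewrite (kappa_const u u0).
have T_gt0 : (0 < #|T|)%N by apply/card_gt0P; exists u0.
have -> : caro_wei e c kappa = c u0 * k.+1%:R.
  rewrite /caro_wei (eq_bigr (fun _ => c u0 * k.+1%:R / #|T|%:R)) => [|u _].
    by rewrite sumr_const -[_ *+ #|_|]mulr_natr mulfVK // pnatr_eq0 -lt0n.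
  by rewrite kappa_u deg_clique // (c_const u u0) -pmulrn !natr1 prednK.
have -> : weight c I = c u0 *+ #|I|.
  by rewrite /weight (eq_bigr (fun _ => c u0)) ?sumr_const // => u _; rewrite (c_const u u0).
rewrite -[c u0 *+ _]mulr_natr ler_wpM2l // ler_nat.
exact: (kdegenerate_clique_card e_clique kappa_u I_deg).
Qed.

End CaroWeiExtremal.

Local Open Scope ring_scope.

Theorem theorem2 (R : realFieldType) (T : finType) (e : rel T)
  (c : T -> R) (kappa : T -> int) :
  simple_graph e -> graph_connected e ->
  (forall u, 0 < c u) ->
  (forall u, 0 <= kappa u /\ kappa u <= (deg e u)%:Z) ->
  alpha e c kappa =
    \sum_(u : T) c u * ((kappa u)%:~R + 1) / ((deg e u)%:R + 1)
  <->
  ((forall u, kappa u = (deg e u)%:Z) \/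
   ((forall u v, u != v -> e u v) /\
    (forall u v, c u = c v) /\ (forall u v, kappa u = kappa v))).
Proof.
move=> [e_irr e_sym] e_conn c_gt0 kappa_range.
have kappa_ge0 u : 0 <= kappa u by case: (kappa_range u).
have c_ge0 u : 0 <= c u by apply: ltW.
rewrite -/(caro_wei e c kappa); split=> [alpha_eq|extremal].
  have exchange : exchange_property e c kappa.
    apply: (exchange_of_greedy_const (conj e_irr e_sym) c_gt0).
    exact: weight_greedy_eq_alpha alpha_eq.
  have [full|/forallPn [x0 kx0_neq]] := boolP [forall u, kappa u == (deg e u)%:Z].
    by left => u; apply/eqP/(forallP full).
  have kx0_lt : kappa x0 < (deg e x0)%:Z.
    by rewrite lt_neqAle kx0_neq; case: (kappa_range x0).
  have [clique c_x0 kappa_x0] := exchange_clique e_irr e_sym kappa_ge0 exchange e_conn kx0_lt.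
  by right; split=> //; split=> u v; rewrite ?c_x0 ?kappa_x0.
apply/le_anti; rewrite caro_wei_le_alpha // andbT.
case: extremal => [full|[clique [c_const kappa_const]]].
  exact: alpha_le_caro_wei_full.
exact: alpha_le_caro_wei_clique.
Qed.
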